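(* Let $q$ be a nonnegative continuous function on $[0,+\infty)$ with $\int_0^{+\infty}tq(t)\,dt<+\infty$, let $h$ be the solution of $h'+h^2-q=0$ with $\lim_{t\to0^+}th(t)=1$, and let $v\in C^2((0,+\infty))$ be the solution of $v''+hv'=0$ with $v'>0$ and $\lim_{t\to0^+}\frac{v(t)}{\log t}=1$. Then $\lim_{t\to+\infty}\frac{v(t)}{\log t}$ exists and $\frac1{I(q)}\le\lim_{t\to+\infty}\frac{v(t)}{\log t}\le1$. Moreover, $\log t+v(1)\ge v(t)\ge\frac1{I(q)}\log t+v(1)$ for all $t>1$.
   Context: $I(q):=\exp\left(\int_0^{+\infty}tq(t)\,dt\right)$. *)

From Stdlib Require Import Reals.
From Coquelicot Require Export Coquelicot.
Export Reals.
Open Scope R_scope.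

Definition Iq (q : R -> R) : R :=
  exp (RInt_gen (fun t => t * q t) (at_point 0) (Rbar_locally p_infty)).

(* Write P(t) = t v'(t) and u(t) = t h(t).  The two equations give
     ((u - 1) / v')' = t q / v' >= 0,     P' = v' (1 - u),
   and, with A(t) = \int_0^t s q(s) ds and K = P exp (A - (u - 1)),
     K' = v' exp (A - (u - 1)) (u - 1)^2 >= 0.
   The first identity and v ~ ln t at 0+ force u >= 1, so P is nonincreasing;
   comparing v with multiples of ln t near 0 then shows P(0+) = 1.  Hence K(0+) = 1,
   so K >= 1 and P >= exp (u - 1 - A) >= exp (- \int_0^oo s q) = 1 / I(q).
   Thus P decreases to some L in [1 / I(q), 1], v / ln t -> L at +oo, and integrating
   1 / I(q) <= t v' <= 1 over [1, t] gives the two bounds on v. *)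

From Stdlib Require Import Reals Lra Classical.
From Coquelicot Require Import Coquelicot.
Open Scope R_scope.

(* [auto_derive] leaves [Derive (fun y => f y)], which [ring] and [field] do not
   identify with [Derive f]. *)
Ltac fold_eta_Derive :=
  repeat match goal with
  | |- context [Derive (fun y : R => ?f y) ?x] =>
      change (Derive (fun y : R => f y) x) with (Derive f x)
  end.

Lemma nondecreasing_of_derive_nonneg (f df : R -> R) (a b : R) : a <= b ->
  (forall x, a <= x <= b -> is_derive f x (df x)) ->
  (forall x, a <= x <= b -> 0 <= df x) -> f a <= f b.
Proof.
  intros Hab Hd Hp.
  destruct (MVT_gen f a b df) as [c [Hc Heq]].
  - intros x Hx. apply Hd. rewrite Rmin_left, Rmax_right in Hx by lra. lra.
  - intros x Hx. rewrite Rmin_left, Rmax_right in Hx by lra.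
    apply continuity_pt_filterlim, (ex_derive_continuous f x).
    eexists. apply Hd. lra.
  - rewrite Rmin_left, Rmax_right in Hc by lra.
    assert (0 <= df c * (b - a)) by (apply Rmult_le_pos; [apply Hp; lra | lra]).
    lra.
Qed.

Lemma mul_ln_increment_le (f : R -> R) (c a b : R) : 0 < a <= b ->
  (forall x, a <= x <= b -> ex_derive f x) ->
  (forall x, a <= x <= b -> c <= x * Derive f x) ->
  c * (ln b - ln a) <= f b - f a.
Proof.
  intros Hab Hd Hc.
  enough (f a - c * ln a <= f b - c * ln b) by lra.
  apply (nondecreasing_of_derive_nonneg (fun x => f x - c * ln x)
           (fun x => Derive f x - c / x)); [lra | |].
  - intros x Hx. auto_derive; [repeat split; try apply Hd; lra |].
    fold_eta_Derive. field. lra.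
  - intros x Hx. specialize (Hc x Hx).
    replace (Derive f x - c / x) with ((x * Derive f x - c) / x) by (field; lra).
    apply Rmult_le_pos; [lra | left; apply Rinv_0_lt_compat; lra].
Qed.

Lemma increment_le_mul_ln (f : R -> R) (c a b : R) : 0 < a <= b ->
  (forall x, a <= x <= b -> ex_derive f x) ->
  (forall x, a <= x <= b -> x * Derive f x <= c) ->
  f b - f a <= c * (ln b - ln a).
Proof.
  intros Hab Hd Hc.
  enough (- c * (ln b - ln a) <= - f b - - f a) by lra.
  apply (mul_ln_increment_le (fun x => - f x)); [lra | |].
  - intros x Hx. apply (ex_derive_opp f), Hd, Hx.
  - intros x Hx. rewrite (Derive_opp f). specialize (Hc x Hx). lra.
Qed.

Lemma at_right_0_iff (P : R -> Prop) :
  at_right 0 P <-> exists d, 0 < d /\ forall s, 0 < s <= d -> P s.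
Proof.
  split.
  - intros [eps Heps]. exists (eps / 2). split; [pose proof (cond_pos eps); lra |].
    intros s Hs. apply Heps; [| lra].
    change (Rabs (s - 0) < eps). rewrite Rminus_0_r, Rabs_pos_eq; pose proof (cond_pos eps); lra.
  - intros [d [Hd HP]]. exists (mkposreal d Hd). intros s Hs Hs0. apply HP.
    change (Rabs (s - 0) < d) in Hs. rewrite Rminus_0_r, Rabs_pos_eq in Hs; lra.
Qed.

Lemma filterlim_Rminus {T : Type} {F : (T -> Prop) -> Prop} {FF : Filter F}
  (f g : T -> R) (a b : R) :
  filterlim f F (locally a) -> filterlim g F (locally b) ->
  filterlim (fun x => f x - g x) F (locally (a - b)).
Proof.
  intros Hf Hg.
  apply (filterlim_comp_2 (G := locally a) (H := locally (- b)) f (fun x => - g x) Rplus Hf).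
  - exact (filterlim_comp _ _ _ g Ropp F (locally b) (locally (- b)) Hg (filterlim_Rbar_opp b)).
  - exact (filterlim_Rbar_plus a (- b) (a - b) eq_refl).
Qed.

Lemma filterlim_Rmult {T : Type} {F : (T -> Prop) -> Prop} {FF : Filter F}
  (f g : T -> R) (a b : R) :
  filterlim f F (locally a) -> filterlim g F (locally b) ->
  filterlim (fun x => f x * g x) F (locally (a * b)).
Proof.
  intros Hf Hg.
  apply (filterlim_comp_2 (G := locally a) (H := locally b) f g Rmult Hf Hg).
  exact (filterlim_Rbar_mult a b (a * b) eq_refl).
Qed.

Lemma nondecreasing_lim_at_right_0_le (f : R -> R) (l : R) :
  (forall x y, 0 < x <= y -> f x <= f y) ->
  filterlim f (at_right 0) (locally l) -> forall t, 0 < t -> l <= f t.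
Proof.
  intros Hincr Hl t Ht.
  assert (Hnear : at_right 0 (fun x => f x <= f t))
    by (apply at_right_0_iff; exists t; split; [exact Ht | intros x Hx; apply Hincr; lra]).
  exact (filterlim_le (F := at_right 0) _ _ (Finite l) (Finite (f t)) Hnear Hl
           (filterlim_const (f t))).
Qed.

Lemma nondecreasing_le_lim_p_infty (f : R -> R) (l a : R) :
  (forall x y, a <= x <= y -> f x <= f y) ->
  filterlim f (Rbar_locally p_infty) (locally l) -> forall t, a <= t -> f t <= l.
Proof.
  intros Hincr Hl t Ht.
  assert (Hnear : Rbar_locally p_infty (fun x => f t <= f x))
    by (exists t; intros x Hx; apply Hincr; lra).
  exact (filterlim_le (F := Rbar_locally p_infty) _ _ (Finite (f t)) (Finite l) Hnear
           (filterlim_const (f t)) Hl).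
Qed.

Lemma nonincreasing_ex_lim_p_infty (f : R -> R) (m : R) :
  (forall a b, 0 < a <= b -> f b <= f a) -> (forall t, 0 < t -> m <= f t) ->
  exists L, m <= L /\ (forall t, 0 < t -> L <= f t) /\
    filterlim f (Rbar_locally p_infty) (locally L).
Proof.
  intros Hdecr Hm.
  set (E := fun y => exists t, 0 < t /\ y = - f t).
  destruct (completeness E) as [M [Hub Hlub]].
  { exists (- m). intros y [t [Ht ->]]. specialize (Hm t Ht). lra. }
  { exists (- f 1). exists 1. split; [lra | reflexivity]. }
  assert (Hinf : forall t, 0 < t -> - M <= f t).
  { intros t Ht. enough (- f t <= M) by lra. apply Hub. exists t. split; [lra | reflexivity]. }
  exists (- M). split; [| split; [exact Hinf |]].
  { enough (M <= - m) by lra. apply Hlub. intros y [t [Ht ->]]. specialize (Hm t Ht). lra. }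
  apply filterlim_locally. intros eps.
  assert (Happrox : exists T, 0 < T /\ f T < - M + eps).
  { apply NNPP. intros Hnone.
    enough (M <= M - eps) by (pose proof (cond_pos eps); lra).
    apply Hlub. intros y [t [Ht ->]].
    destruct (Rlt_le_dec (f t) (- M + eps)); [exfalso; apply Hnone; exists t; auto | lra]. }
  destruct Happrox as [T [HT HfT]].
  exists T. intros t Ht.
  change (Rabs (f t - - M) < eps). apply Rabs_def1.
  - specialize (Hdecr T t ltac:(lra)). lra.
  - specialize (Hinf t ltac:(lra)). pose proof (cond_pos eps). lra.
Qed.

Lemma filterlim_div_ln_at_right_0 (B c : R) :
  filterlim (fun s => B / ln s + c) (at_right 0) (locally c).
Proof.
  apply (filterlim_comp _ _ _ ln (fun y => B / y + c) _ (Rbar_locally m_infty)).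
  { apply is_lim_ln_0. }
  pose proof (is_lim_plus' (fun y => B / y) (fun _ => c) m_infty 0 c) as Hlim.
  rewrite Rplus_0_l in Hlim. apply Hlim; [| apply is_lim_const].
  replace (Finite 0) with (Rbar_mult B (Rbar_inv m_infty)) by (simpl; f_equal; ring).
  apply is_lim_scal_l, is_lim_inv; [apply is_lim_id | discriminate].
Qed.

Lemma ln_ratio_at_right_0_le (f : R -> R) (l c B s1 : R) :
  filterlim (fun s => f s / ln s) (at_right 0) (locally l) -> 0 < s1 ->
  (forall s, 0 < s <= s1 -> B + c * ln s <= f s) -> l <= c.
Proof.
  intros Hf Hs1 Hle.
  assert (Hnear : at_right 0 (fun s => f s / ln s <= B / ln s + c)).
  { apply at_right_0_iff. exists (Rmin s1 (1/2)). split; [apply Rmin_pos; lra |].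
    intros s Hs. pose proof (Rmin_l s1 (1/2)). pose proof (Rmin_r s1 (1/2)).
    assert (Hln : ln s < 0) by (rewrite <- ln_1; apply ln_increasing; lra).
    specialize (Hle s ltac:(lra)).
    apply (Rmult_le_reg_r (- ln s)); [lra |].
    replace (f s / ln s * - ln s) with (- f s) by (field; lra).
    replace ((B / ln s + c) * - ln s) with (- B - c * ln s) by (field; lra).
    lra. }
  exact (filterlim_le (F := at_right 0) _ _ (Finite l) (Finite c) Hnear Hf
           (filterlim_div_ln_at_right_0 B c)).
Qed.

Lemma ln_ratio_at_right_0_ge (f : R -> R) (l c B s1 : R) :
  filterlim (fun s => f s / ln s) (at_right 0) (locally l) -> 0 < s1 ->
  (forall s, 0 < s <= s1 -> f s <= B + c * ln s) -> c <= l.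
Proof.
  intros Hf Hs1 Hle.
  enough (- l <= - c) by lra.
  apply (ln_ratio_at_right_0_le (fun s => - f s) (- l) (- c) (- B) s1); [| exact Hs1 |].
  - apply (filterlim_ext (fun s => - (f s / ln s))); [intros s; unfold Rdiv; ring |].
    exact (filterlim_comp _ _ _ _ Ropp _ (locally l) (locally (- l)) Hf (filterlim_Rbar_opp l)).
  - intros s Hs. specialize (Hle s Hs). lra.
Qed.

Lemma ln_ratio_lim_p_infty (f : R -> R) (L : R) :
  (forall t, 0 < t -> ex_derive f t) ->
  filterlim (fun t => t * Derive f t) (Rbar_locally p_infty) (locally L) ->
  filterlim (fun t => f t / ln t) (Rbar_locally p_infty) (locally L).
Proof.
  intros Hd Hlim. apply filterlim_locally. intros eps.
  pose proof (cond_pos eps) as Heps.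
  assert (Heps2 : 0 < eps / 2) by lra.
  destruct (proj1 (filterlim_locally _ _) Hlim (mkposreal _ Heps2)) as [M HM].
  set (T := Rmax M 1 + 1).
  assert (HT : M < T /\ 1 < T) by (unfold T; pose proof (Rmax_l M 1); pose proof (Rmax_r M 1); lra).
  assert (HlnT : 0 < ln T) by (rewrite <- ln_1; apply ln_increasing; lra).
  set (C := f T - L * ln T).
  exists (Rmax T (exp (2 * Rabs C / eps))). intros t Ht.
  pose proof (Rmax_l T (exp (2 * Rabs C / eps))). pose proof (Rmax_r T (exp (2 * Rabs C / eps))).
  assert (Hlnt : 2 * Rabs C / eps < ln t).
  { rewrite <- (ln_exp (2 * Rabs C / eps)). apply ln_increasing; [apply exp_pos | lra]. }
  assert (HC : 2 * Rabs C < eps * ln t).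
  { apply (Rmult_lt_compat_r eps) in Hlnt; [| lra].
    replace (2 * Rabs C / eps * eps) with (2 * Rabs C) in Hlnt by (field; lra). lra. }
  assert (Hslope : forall x, T <= x <= t -> Rabs (x * Derive f x - L) < eps / 2).
  { intros x Hx. apply (HM x). lra. }
  pose proof (mul_ln_increment_le f (L - eps / 2) T t ltac:(lra)
    ltac:(intros x Hx; apply Hd; lra)
    ltac:(intros x Hx; specialize (Hslope x Hx); apply Rabs_def2 in Hslope; lra)) as Hlo.
  pose proof (increment_le_mul_ln f (L + eps / 2) T t ltac:(lra)
    ltac:(intros x Hx; apply Hd; lra)
    ltac:(intros x Hx; specialize (Hslope x Hx); apply Rabs_def2 in Hslope; lra)) as Hhi.
  pose proof (Rle_abs C). pose proof (Rle_abs (- C)). rewrite Rabs_Ropp in *.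
  assert (Hlnt0 : 0 < ln t) by (pose proof (Rabs_pos C); nra).
  change (Rabs (f t / ln t - L) < eps).
  replace (f t / ln t - L) with ((f t - L * ln t) / ln t) by (field; lra).
  apply Rabs_def1.
  - apply (Rmult_lt_reg_r (ln t)); [lra |].
    replace ((f t - L * ln t) / ln t * ln t) with (f t - L * ln t) by (field; lra).
    unfold C in *. nra.
  - apply (Rmult_lt_reg_r (ln t)); [lra |].
    replace ((f t - L * ln t) / ln t * ln t) with (f t - L * ln t) by (field; lra).
    unfold C in *. nra.
Qed.

Lemma continuous_comp_Rabs (q : R -> R) :
  (forall t, 0 <= t -> filterlim q (within (fun x => 0 <= x) (locally t)) (locally (q t))) ->
  forall x, continuous (fun x => q (Rabs x)) x.
Proof.
  intros Hq x P HP.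
  pose proof (continuous_Rabs x _ (Hq (Rabs x) (Rabs_pos x) P HP)) as Hnear.
  unfold filtermap in *. eapply filter_imp; [| exact Hnear].
  intros y Hy. apply Hy, Rabs_pos.
Qed.

Lemma filterlim_RInt_at_point (F : (R -> Prop) -> Prop) (f : R -> R) (a l : R) :
  Filter F -> is_RInt_gen f (at_point a) F l ->
  filterlim (fun b => RInt f a b) F (locally l).
Proof.
  intros HF Hl P HP.
  destruct (Hl P HP) as [Q S HQ HS Himp].
  unfold filtermap. apply (filter_imp S); [| exact HS].
  intros b Hb. destruct (Himp a b HQ Hb) as [y [Hy HPy]]. simpl in Hy.
  rewrite (is_RInt_unique f a b y Hy). exact HPy.
Qed.

(* [q] is only continuous on [0, +oo); integrating [x * q |x|] instead gives an
   integrand continuous on all of [R], so the FTC applies at every point, 0 included. *)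
Definition moment (q : R -> R) (t : R) : R := RInt (fun x => x * q (Rabs x)) 0 t.

Section Moment.

Variable q : R -> R.
Hypothesis q_cont : forall t, 0 <= t ->
  filterlim q (within (fun x => 0 <= x) (locally t)) (locally (q t)).

Lemma is_derive_moment x : 0 <= x -> is_derive (moment q) x (x * q x).
Proof.
  intros Hx. replace (x * q x) with (x * q (Rabs x)) by (rewrite Rabs_pos_eq; easy).
  assert (Hcont : forall y, continuous (fun x => x * q (Rabs x)) y).
  { intros y. apply (continuous_mult (fun x => x) (fun x => q (Rabs x))).
    - apply continuous_id.
    - exact (continuous_comp_Rabs q q_cont y). }
  apply (is_derive_RInt (fun x => x * q (Rabs x)) (moment q) 0); [| apply Hcont].
  apply filter_forall. intros b. unfold moment.
  apply (@RInt_correct R_CompleteNormedModule), (@ex_RInt_continuous R_CompleteNormedModule).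
  intros; apply Hcont.
Qed.

Lemma moment_at_right_0 : filterlim (moment q) (at_right 0) (locally 0).
Proof.
  replace 0 with (moment q 0) at 2 by (unfold moment; rewrite RInt_point; reflexivity).
  apply (filterlim_filter_le_1 _ (filter_le_within (F := locally 0) _)).
  change (continuous (moment q) 0).
  apply (ex_derive_continuous (K := R_AbsRing) (V := R_NormedModule)).
  eexists. apply is_derive_moment. lra.
Qed.

Hypothesis q_nonneg : forall t, 0 <= t -> 0 <= q t.
Hypothesis q_int : ex_RInt_gen (fun t => t * q t) (at_point 0) (Rbar_locally p_infty).

Lemma moment_le_RInt_gen t : 0 <= t ->
  moment q t <= RInt_gen (fun t => t * q t) (at_point 0) (Rbar_locally p_infty).
Proof.
  apply (nondecreasing_le_lim_p_infty (moment q)).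
  - intros a b Hab. apply (nondecreasing_of_derive_nonneg _ (fun x => x * q x)); [lra | |].
    + intros x Hx. apply is_derive_moment. lra.
    + intros x Hx. apply Rmult_le_pos; [| apply q_nonneg]; lra.
  - apply (filterlim_ext_loc (fun b => RInt (fun t => t * q t) 0 b)).
    + exists 0. intros b Hb. apply RInt_ext. intros x Hx.
      rewrite Rmin_left, Rmax_right in Hx by lra. rewrite Rabs_pos_eq; lra.
    + apply filterlim_RInt_at_point; [apply Rbar_locally_filter |].
      apply (@RInt_gen_correct R_CompleteNormedModule); [| | exact q_int];
        apply Proper_StrongProper; [apply at_point_filter | apply Rbar_locally_filter].
Qed.

End Moment.

Section Riccati.

Variables q h v : R -> R.
Hypothesis q_nonneg : forall t, 0 <= t -> 0 <= q t.
Hypothesis q_cont : forall t, 0 <= t ->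
  filterlim q (within (fun x => 0 <= x) (locally t)) (locally (q t)).
Hypothesis q_int : ex_RInt_gen (fun t => t * q t) (at_point 0) (Rbar_locally p_infty).
Hypothesis h_ode : forall t, 0 < t -> is_derive h t (q t - h t ^ 2).
Hypothesis h_lim0 : filterlim (fun t => t * h t) (at_right 0) (locally 1).
Hypothesis v_d1 : forall t, 0 < t -> ex_derive v t.
Hypothesis v_d2 : forall t, 0 < t -> ex_derive (Derive v) t.
Hypothesis v_ode : forall t, 0 < t -> Derive (Derive v) t + h t * Derive v t = 0.
Hypothesis v_pos : forall t, 0 < t -> 0 < Derive v t.
Hypothesis v_lim0 : filterlim (fun t => v t / ln t) (at_right 0) (locally 1).

Lemma Derive_h t : 0 < t -> Derive h t = q t - h t ^ 2.
Proof. intros Ht. apply is_derive_unique, h_ode, Ht. Qed.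

Lemma Derive2_v t : 0 < t -> Derive (Derive v) t = - (h t * Derive v t).
Proof. intros Ht. specialize (v_ode t Ht). lra. Qed.

Lemma riccati_ratio_nondecreasing a b : 0 < a <= b ->
  (a * h a - 1) / Derive v a <= (b * h b - 1) / Derive v b.
Proof.
  intros Hab.
  apply (nondecreasing_of_derive_nonneg (fun x => (x * h x - 1) / Derive v x)
           (fun x => x * q x / Derive v x)); [lra | |].
  - intros x Hx. assert (Hx0 : 0 < x) by lra. pose proof (v_pos x Hx0) as Hvx.
    auto_derive.
    { split; [eexists; apply h_ode, Hx0 |]. split; [apply v_d2, Hx0 |].
      split; [lra | exact I]. }
    fold_eta_Derive. rewrite Derive_h, Derive2_v by exact Hx0. field. lra.
  - intros x Hx. apply Rmult_le_pos; [apply Rmult_le_pos; [| apply q_nonneg]; lra |].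
    left. apply Rinv_0_lt_compat, v_pos. lra.
Qed.

(* If [t h t < 1], the ratio above is [<= -c < 0] on [(0, t]] while [s h s -> 1],
   forcing [v' < 1] near 0: then [v] stays bounded below near 0, contradicting [v ~ ln s]. *)
Lemma one_le_mul_h t : 0 < t -> 1 <= t * h t.
Proof.
  intros Ht0. destruct (Rle_lt_dec 1 (t * h t)) as [| Hlt]; [assumption | exfalso].
  pose proof (v_pos t Ht0) as Hv0.
  set (c := (1 - t * h t) / Derive v t).
  assert (Hc : 0 < c) by (apply Rdiv_lt_0_compat; lra).
  assert (Hnear : at_right 0 (fun s => - c < s * h s - 1)).
  { apply (filter_imp (fun s => ball 1 (mkposreal c Hc) (s * h s))).
    - intros s Hs. change (Rabs (s * h s - 1) < c) in Hs. apply Rabs_def2 in Hs. lra.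
    - apply (proj1 (filterlim_locally _ _) h_lim0). }
  apply at_right_0_iff in Hnear. destruct Hnear as [d [Hd Hnear]].
  set (s0 := Rmin d t).
  assert (Hs0 : 0 < s0 /\ s0 <= d /\ s0 <= t)
    by (unfold s0; split; [apply Rmin_pos | split; [apply Rmin_l | apply Rmin_r]]; lra).
  assert (Hslope : forall s, 0 < s <= s0 -> Derive v s <= 1).
  { intros s Hs. pose proof (v_pos s ltac:(lra)) as Hvs.
    pose proof (riccati_ratio_nondecreasing s t ltac:(lra)) as Hratio.
    fold c in Hratio. replace ((t * h t - 1) / Derive v t) with (- c) in Hratio
      by (unfold c; field; lra).
    apply (Rmult_le_compat_r (Derive v s)) in Hratio; [| lra].
    replace ((s * h s - 1) / Derive v s * Derive v s) with (s * h s - 1) in Hratio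
      by (field; lra).
    specialize (Hnear s ltac:(lra)).
    apply (Rmult_le_reg_l c); nra. }
  enough (1 <= 0) by lra.
  apply (ln_ratio_at_right_0_le v 1 0 (v s0 - s0) s0 v_lim0); [lra |].
  intros s Hs.
  enough (s - v s <= s0 - v s0) by lra.
  apply (nondecreasing_of_derive_nonneg (fun x => x - v x) (fun x => 1 - Derive v x));
    [lra | |].
  - intros x Hx. auto_derive; [apply v_d1; lra |]. fold_eta_Derive. ring.
  - intros x Hx. specialize (Hslope x ltac:(lra)). lra.
Qed.

Lemma mul_Derive_v_nonincreasing a b : 0 < a <= b -> b * Derive v b <= a * Derive v a.
Proof.
  intros Hab.
  enough (- (a * Derive v a) <= - (b * Derive v b)) by lra.
  apply (nondecreasing_of_derive_nonneg (fun x => - (x * Derive v x))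
           (fun x => Derive v x * (x * h x - 1))); [lra | |].
  - intros x Hx. auto_derive; [apply v_d2; lra |].
    fold_eta_Derive. rewrite Derive2_v by lra. ring.
  - intros x Hx. apply Rmult_le_pos; [left; apply v_pos; lra |].
    pose proof (one_le_mul_h x ltac:(lra)). lra.
Qed.

Lemma mul_Derive_v_le_1 t : 0 < t -> t * Derive v t <= 1.
Proof.
  intros Ht.
  apply (ln_ratio_at_right_0_ge v 1 _ (v t - t * Derive v t * ln t) t v_lim0 Ht).
  intros s Hs.
  pose proof (mul_ln_increment_le v (t * Derive v t) s t Hs
    ltac:(intros x Hx; apply v_d1; lra)
    ltac:(intros x Hx; apply mul_Derive_v_nonincreasing; lra)).
  lra.
Qed.

Lemma mul_Derive_v_at_right_0 :
  filterlim (fun t => t * Derive v t) (at_right 0) (locally 1).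
Proof.
  apply filterlim_locally. intros eps. pose proof (cond_pos eps) as Heps.
  assert (Happrox : exists s1, 0 < s1 /\ 1 - eps < s1 * Derive v s1).
  { apply NNPP. intros Hnone.
    assert (Hbound : forall x, 0 < x -> x * Derive v x <= 1 - eps).
    { intros x Hx. apply Rnot_lt_le. intros Hlt. apply Hnone. exists x. split; assumption. }
    enough (1 <= 1 - eps) by lra.
    apply (ln_ratio_at_right_0_le v 1 (1 - eps) (v 1) 1 v_lim0); [lra |].
    intros s Hs.
    pose proof (increment_le_mul_ln v (1 - eps) s 1 Hs
      ltac:(intros x Hx; apply v_d1; lra) ltac:(intros x Hx; apply Hbound; lra)) as Hincr.
    rewrite ln_1 in Hincr. lra. }
  destruct Happrox as [s1 [Hs1 Happrox]].
  apply at_right_0_iff. exists s1. split; [exact Hs1 |].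
  intros s Hs. change (Rabs (s * Derive v s - 1) < eps). apply Rabs_def1.
  - pose proof (mul_Derive_v_le_1 s ltac:(lra)). lra.
  - pose proof (mul_Derive_v_nonincreasing s s1 Hs). lra.
Qed.

Let K t := t * Derive v t * exp (moment q t - (t * h t - 1)).

Lemma K_nondecreasing a b : 0 < a <= b -> K a <= K b.
Proof.
  intros Hab.
  apply (nondecreasing_of_derive_nonneg K
           (fun x => exp (moment q x - (x * h x - 1)) * Derive v x * (x * h x - 1) ^ 2));
    [lra | |].
  - intros x Hx. assert (Hx0 : 0 < x) by lra. unfold K.
    pose proof (is_derive_moment q q_cont x ltac:(lra)) as Hmom.
    auto_derive.
    { split; [apply v_d2, Hx0 |]. split; [eexists; exact Hmom |].
      split; [eexists; apply h_ode, Hx0 | exact I]. }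
    fold_eta_Derive. rewrite Derive_h, Derive2_v, (is_derive_unique _ _ _ Hmom) by exact Hx0.
    unfold Rminus. ring.
  - intros x Hx. apply Rmult_le_pos; [apply Rmult_le_pos |].
    + left. apply exp_pos.
    + left. apply v_pos. lra.
    + apply pow2_ge_0.
Qed.

Lemma K_at_right_0 : filterlim K (at_right 0) (locally 1).
Proof.
  assert (Hexp : filterlim (fun t => exp (moment q t - (t * h t - 1))) (at_right 0)
                   (locally (exp (0 - (1 - 1))))).
  { apply (filterlim_comp _ _ _ _ exp _ (locally (0 - (1 - 1)))); [| apply continuous_exp].
    apply filterlim_Rminus; [apply moment_at_right_0, q_cont |].
    apply filterlim_Rminus; [exact h_lim0 | apply filterlim_const]. }
  rewrite Rminus_eq_0, Rminus_0_r, exp_0 in Hexp.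
  rewrite <- (Rmult_1_r 1).
  exact (filterlim_Rmult _ _ _ _ mul_Derive_v_at_right_0 Hexp).
Qed.

Lemma one_le_K t : 0 < t -> 1 <= K t.
Proof.
  apply (nondecreasing_lim_at_right_0_le K); [| exact K_at_right_0].
  intros x y Hxy. apply K_nondecreasing. lra.
Qed.

Lemma exp_opp_RInt_gen_le_mul_Derive_v t : 0 < t ->
  exp (- RInt_gen (fun t => t * q t) (at_point 0) (Rbar_locally p_infty)) <= t * Derive v t.
Proof.
  intros Ht.
  replace (t * Derive v t) with (K t * exp ((t * h t - 1) - moment q t)).
  2:{ unfold K. rewrite Rmult_assoc, <- exp_plus.
      replace (moment q t - (t * h t - 1) + (t * h t - 1 - moment q t)) with 0 by ring.
      rewrite exp_0. ring. }
  rewrite <- (Rmult_1_l (exp (- _))).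
  apply Rmult_le_compat; [lra | left; apply exp_pos | apply one_le_K, Ht |].
  assert (Hexponent : - RInt_gen (fun t => t * q t) (at_point 0) (Rbar_locally p_infty)
                      <= t * h t - 1 - moment q t).
  { pose proof (one_le_mul_h t Ht).
    pose proof (moment_le_RInt_gen q q_cont q_nonneg q_int t ltac:(lra)).
    lra. }
  destruct (Rle_lt_or_eq_dec _ _ Hexponent) as [Hlt | ->];
    [left; apply exp_increasing, Hlt | right; reflexivity].
Qed.

End Riccati.

Theorem lemma4p2 (q h v : R -> R)
  (* q nonnegative and continuous on [0,+oo) *)
  (q_nonneg : forall t, 0 <= t -> 0 <= q t)
  (q_cont : forall t, 0 <= t ->
     filterlim q (within (fun x => 0 <= x) (locally t)) (locally (q t)))
  (* \int_0^{+oo} t q(t) dt < +oo *)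
  (q_int : ex_RInt_gen (fun t => t * q t) (at_point 0) (Rbar_locally p_infty))
  (* h solves h' + h^2 - q = 0 on (0,+oo), with lim_{t->0+} t h(t) = 1 *)
  (h_ode : forall t, 0 < t -> is_derive h t (q t - (h t)^2))
  (h_lim0 : filterlim (fun t => t * h t) (at_right 0) (locally 1))
  (* v in C^2((0,+oo)) *)
  (v_d1 : forall t, 0 < t -> ex_derive v t)
  (v_d2 : forall t, 0 < t -> ex_derive (Derive v) t)
  (v_c2 : forall t, 0 < t -> continuous (Derive (Derive v)) t)
  (* v'' + h v' = 0, v' > 0, lim_{t->0+} v(t)/log t = 1 *)
  (v_ode : forall t, 0 < t -> Derive (Derive v) t + h t * Derive v t = 0)
  (v_pos : forall t, 0 < t -> 0 < Derive v t)
  (v_lim0 : filterlim (fun t => v t / ln t) (at_right 0) (locally 1)) :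
  (exists L : R,
     filterlim (fun t => v t / ln t) (Rbar_locally p_infty) (locally L) /\
     / Iq q <= L <= 1) /\
  (forall t, 1 < t -> ln t + v 1 >= v t /\ v t >= / Iq q * ln t + v 1).
Proof.
  replace (/ Iq q) with
    (exp (- RInt_gen (fun t => t * q t) (at_point 0) (Rbar_locally p_infty)))
    by (unfold Iq; rewrite exp_Ropp; reflexivity).
  pose proof (exp_opp_RInt_gen_le_mul_Derive_v q h v q_nonneg q_cont q_int h_ode h_lim0
                v_d1 v_d2 v_ode v_pos v_lim0) as Hlow.
  pose proof (mul_Derive_v_le_1 q h v q_nonneg h_ode h_lim0 v_d1 v_d2 v_ode v_pos v_lim0)
    as Hup.
  destruct (nonincreasing_ex_lim_p_infty (fun t => t * Derive v t) _
              (mul_Derive_v_nonincreasing q h v q_nonneg h_ode h_lim0 v_d1 v_d2 v_ode v_pos v_lim0)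
              Hlow) as [L [HlowL [HL Hlim]]].
  split.
  - exists L. split; [exact (ln_ratio_lim_p_infty v L v_d1 Hlim) |].
    pose proof (HL 1 Rlt_0_1). pose proof (Hup 1 Rlt_0_1). lra.
  - intros t Ht.
    pose proof (increment_le_mul_ln v 1 1 t ltac:(lra)
                  ltac:(intros x Hx; apply v_d1; lra) ltac:(intros x Hx; apply Hup; lra)).
    pose proof (mul_ln_increment_le v _ 1 t ltac:(lra)
                  ltac:(intros x Hx; apply v_d1; lra) ltac:(intros x Hx; apply Hlow; lra)).
    rewrite ln_1 in *. lra.
Qed.
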